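(* Let $A,B$ be disjoint subsets of $S$, and let $a\in A$, $b\in B$, $c\in S$ satisfy $r(c,a)>r(a,c)>0$ and $r(c,b)>r(b,c)>0$. Then, as $N\to\infty$, $$\sup_{0\le i\le\lfloor N/2\rfloor}\left|h_{\mathcal{E}_N(A),\mathcal{E}_N(B)}(\zeta_i^{a,c})-1\right|=o(1)\quad\text{and}\quad\sup_{0\le i\le\lfloor N/2\rfloor}h_{\mathcal{E}_N(A),\mathcal{E}_N(B)}(\zeta_i^{b,c})=o(1).$$
   Context: $S$ is a finite set, $r:S\times S\to[0,\infty)$ transition rates of an irreducible continuous-time random walk on $S$ with $r(x,x)=0$, reversible w.r.t. a probability measure $m$. $(d_N)$ positive with $d_N\to0$ and $d_N\log N\to0$. $\mathcal{H}_N=\{\eta\in\mathbb{N}^S:\sum_x\eta_x=N\}$; the inclusion process is the Markov chain on $\mathcal{H}_N$ with generator $(\mathcal{L}_Nf)(\eta)=\sum_{x,y}\eta_x(d_N+\eta_y)r(x,y)\{f(\sigma^{x,y}\eta)-f(\eta)\}$, $\sigma^{x,y}\eta$ moving one particle from $x$ to $y$ if possible. $\xi_N^x$: all $N$ particles at $x$; $\mathcal{E}_N(A)=\{\xi_N^x:x\in A\}$. $h_{\mathcal{A},\mathcal{B}}(\eta)=\mathbb{P}_\eta[\tau_{\mathcal{A}}<\tau_{\mathcal{B}}]$ with $\tau$ hitting times. For $x,y\in S$ and $0\le i\le N$, $\zeta_i^{x,y}$ is the configuration with $N-i$ particles at $x$, $i$ particles at $y$ and none elsewhere. *)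

From HB Require Import structures.
From mathcomp Require Import all_boot all_order all_algebra.
From mathcomp Require Import all_classical all_reals all_analysis.
Set Implicit Arguments. Unset Strict Implicit. Unset Printing Implicit Defensive.
Import Order.TTheory GRing.Theory Num.Theory numFieldNormedType.Exports.
Local Open Scope ring_scope.

Section Inclusion.
Variables (R : realType) (S : finType).

Definition config := {ffun S -> nat}.

Definition xi (N : nat) (x : S) : config := [ffun z => if z == x then N else 0%N].

Definition zeta (N i : nat) (x y : S) : config :=
  [ffun z => if z == x then (N - i)%N else if z == y then i else 0%N].

Definition EN (N : nat) (A : {set S}) : pred config :=
  fun eta => [exists x in A, eta == xi N x].

Definition sigma (x y : S) (eta : config) : config :=
  if (0 < eta x)%N then
    [ffun z => ((eta z - (z == x)) + (z == y))%N]
  else eta.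

Definition incl_rate (r : S -> S -> R) (dN : R) (eta : config) (x y : S) : R :=
  (eta x)%:R * (dN + (eta y)%:R) * r x y.

Definition incl_total (r : S -> S -> R) (dN : R) (eta : config) : R :=
  \sum_x \sum_y incl_rate r dN eta x y.

(* hitn n eta = P_eta[tau_A < tau_B and tau_A occurs within the first n jumps]
   (hitting probabilities of the continuous-time chain are those of its jump chain;
   if the total rate is 0, eta is absorbing and the sum below is 0 since x/0 = 0) *)
Fixpoint hitn (r : S -> S -> R) (dN : R) (PA PB : pred config) (n : nat)
    (eta : config) : R :=
  if PB eta then 0 else if PA eta then 1 else
  match n with
  | 0 => 0
  | n'.+1 => \sum_x \sum_y (incl_rate r dN eta x y / incl_total r dN eta) *
                           hitn r dN PA PB n' (sigma x y eta)
  end.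

(* h_{A,B}(eta) = P_eta[tau_A < tau_B] = lim_n hitn n eta (nondecreasing limit) *)
Definition hit (r : S -> S -> R) (dN : R) (PA PB : pred config) (eta : config) : R :=
  limn (fun n => hitn r dN PA PB n eta).

End Inclusion.

(* Let h = h_{E_N(A),E_N(B)} and zeta_j = zeta_j^{a,c}, so that zeta_0 = xi_N^a.
   From zeta_j the walk moves to zeta_{j-1} at rate j (d_N + N - j) r(c,a), to
   zeta_{j+1} at rate (N - j) (d_N + j) r(a,c), and elsewhere, where h >= 0, at total
   rate at most d_N N M with M = sum_y (r(a,y) + r(c,y)); hence h is superharmonic
   along the segment.  As r(c,a) > r(a,c), the walk drifts back to zeta_0, where
   h = 1: with phi = 2 r(a,c) / (r(c,a) + r(a,c)) < 1 and L = 3N/4, the barrier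
   g_j = 1 - phi^(L-j) - kappa d_N log(j+1) is subharmonic for 0 < j < L, and
   g_0 <= 1 = h(zeta_0), g_L <= 0 <= h(zeta_L).  The discrete minimum principle
   gives h >= g, and for j <= N/2 both phi^(L-j) and kappa d_N log N tend to 0.
   The statement for b follows by exchanging A and B, since h_{A,B} + h_{B,A} <= 1. *)

From HB Require Import structures.
From mathcomp Require Import all_boot all_order all_algebra.
From mathcomp Require Import all_classical all_reals all_analysis.
From mathcomp Require Import zify ring lra.
Set Implicit Arguments. Unset Strict Implicit. Unset Printing Implicit Defensive.
Import Order.TTheory GRing.Theory Num.Theory numFieldNormedType.Exports.
Local Open Scope ring_scope.

Lemma pair_le_double_sum (R : numDomainType) (T : finType) (f : T -> T -> R) x y :
  x != y -> (forall u v, 0 <= f u v) -> f x y + f y x <= \sum_u \sum_v f u v.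
Proof.
move=> xy f_ge0.
have row_ge0 u : 0 <= \sum_v f u v by apply: sumr_ge0.
have le_row u v : f u v <= \sum_w f u w.
  by rewrite (bigD1 v) //= ler_wpDr ?sumr_ge0.
rewrite (bigD1 x) //= (bigD1 y (P := fun u => u != x)) 1?eq_sym //= addrA.
by rewrite ler_wpDr ?sumr_ge0 // lerD.
Qed.

Section FirstStep.
Variables (R : realType) (S : finType) (r : S -> S -> R) (dN : R).
Hypotheses (r_ge0 : forall x y, 0 <= r x y) (dN_ge0 : 0 <= dN).

(* All weights vanish at an absorbing [eta] (total rate 0), since x / 0 = 0. *)
Definition jump_avg (eta : config S) (f : S -> S -> R) : R :=
  \sum_x \sum_y incl_rate r dN eta x y / incl_total r dN eta * f x y.

Lemma incl_rate_ge0 eta x y : 0 <= incl_rate r dN eta x y.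
Proof. by rewrite /incl_rate !mulr_ge0 // addr_ge0. Qed.

Lemma incl_total_ge0 eta : 0 <= incl_total r dN eta.
Proof. by do 2![apply: sumr_ge0 => ? _]; apply: incl_rate_ge0. Qed.

Lemma jump_prob_ge0 eta x y : 0 <= incl_rate r dN eta x y / incl_total r dN eta.
Proof. by rewrite divr_ge0 ?incl_rate_ge0 ?incl_total_ge0. Qed.

Lemma ler_jump_avg eta (f g : S -> S -> R) :
  (forall x y, f x y <= g x y) -> jump_avg eta f <= jump_avg eta g.
Proof.
by move=> fg; do 2![apply: ler_sum => ? _]; rewrite ler_wpM2l ?jump_prob_ge0.
Qed.

Lemma jump_avg1_le1 eta : jump_avg eta (fun _ _ => 1) <= 1.
Proof.
rewrite /jump_avg; under eq_bigr do under eq_bigr do rewrite mulr1.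
under eq_bigr do rewrite -mulr_suml; rewrite -mulr_suml.
rewrite -/(incl_total r dN eta).
by have [->|/divff->] := eqVneq (incl_total r dN eta) 0; rewrite ?mul0r.
Qed.

Lemma jump_avg_ge0 eta (f : S -> S -> R) :
  (forall x y, 0 <= f x y) -> 0 <= jump_avg eta f.
Proof. by move=> f_ge0; do 2![apply: sumr_ge0 => ? _]; rewrite mulr_ge0 ?jump_prob_ge0. Qed.

Lemma jump_avg_le1 eta (f : S -> S -> R) :
  (forall x y, f x y <= 1) -> jump_avg eta f <= 1.
Proof. by move=> f_le1; apply: le_trans (jump_avg1_le1 eta); apply: ler_jump_avg. Qed.

Lemma jump_avgD eta (f g : S -> S -> R) :
  jump_avg eta (fun x y => f x y + g x y) = jump_avg eta f + jump_avg eta g.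
Proof.
rewrite -big_split; apply: eq_bigr => x _; rewrite -big_split.
by apply: eq_bigr => y _; rewrite mulrDr.
Qed.

Lemma jump_avgZ eta (f : S -> S -> R) :
  incl_total r dN eta != 0 ->
  incl_total r dN eta * jump_avg eta f = \sum_x \sum_y incl_rate r dN eta x y * f x y.
Proof.
move=> Z0; rewrite mulr_sumr; apply: eq_bigr => x _; rewrite mulr_sumr.
by apply: eq_bigr => y _; rewrite mulrCA mulrA divfK.
Qed.

Variables PA PB : pred (config S).

Lemma hitn0 eta :
  hitn r dN PA PB 0 eta = if PB eta then 0 else if PA eta then 1 else 0.
Proof. by []. Qed.

Lemma hitnS n eta : hitn r dN PA PB n.+1 eta =
  if PB eta then 0 else if PA eta then 1
  else jump_avg eta (fun x y => hitn r dN PA PB n (sigma x y eta)).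
Proof. by []. Qed.

Lemma hitn_ge0 n eta : 0 <= hitn r dN PA PB n eta.
Proof.
elim: n eta => [|n IHn] eta; first by rewrite hitn0; case: (PB eta); case: (PA eta).
by rewrite hitnS; case: (PB eta); case: (PA eta) => //; apply: jump_avg_ge0.
Qed.

Lemma hitn_le1 n eta : hitn r dN PA PB n eta <= 1.
Proof.
elim: n eta => [|n IHn] eta; first by rewrite hitn0; case: (PB eta); case: (PA eta).
by rewrite hitnS; case: (PB eta); case: (PA eta) => //; apply: jump_avg_le1.
Qed.

Lemma nondecreasing_hitn eta :
  {homo (fun n => hitn r dN PA PB n eta) : n m / (n <= m)%N >-> n <= m}.
Proof.
apply/nondecreasing_seqP => n; elim: n eta => [|n IHn] eta; rewrite hitnS.
  rewrite hitn0; case: (PB eta); case: (PA eta) => //.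
  by apply: jump_avg_ge0 => x y; apply: hitn_ge0.
by rewrite hitnS; case: (PB eta); case: (PA eta) => //; apply: ler_jump_avg.
Qed.

Lemma is_cvg_hitn eta : cvgn (fun n => hitn r dN PA PB n eta).
Proof.
apply: nondecreasing_is_cvgn; first exact: nondecreasing_hitn.
by exists 1 => _ [n _ <-]; apply: hitn_le1.
Qed.

Lemma hitn_le_hit n eta : hitn r dN PA PB n eta <= hit r dN PA PB eta.
Proof. exact: nondecreasing_cvgn_le (@nondecreasing_hitn eta) (@is_cvg_hitn eta) n. Qed.

Lemma hit_ge0 eta : 0 <= hit r dN PA PB eta.
Proof. exact: le_trans (@hitn_ge0 0 eta) (@hitn_le_hit 0 eta). Qed.

Lemma hit_le1 eta : hit r dN PA PB eta <= 1.
Proof. by apply: limr_le; [apply: is_cvg_hitn | apply: nearW => n; apply: hitn_le1]. Qed.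

Lemma hit_eq1 eta : PA eta -> ~~ PB eta -> hit r dN PA PB eta = 1.
Proof.
move=> A_eta /negbTE B_eta; apply: cvg_lim => //.
by apply: cvg_near_cst; apply: nearW => -[|n]; rewrite ?hitn0 ?hitnS A_eta B_eta.
Qed.

Lemma hit_step eta : ~~ PA eta -> ~~ PB eta ->
  hit r dN PA PB eta = jump_avg eta (fun x y => hit r dN PA PB (sigma x y eta)).
Proof.
move=> /negbTE A_eta /negbTE B_eta.
have : ((fun n => hitn r dN PA PB n.+1 eta) @ \oo -->
       jump_avg eta (fun x y => hit r dN PA PB (sigma x y eta)))%classic.
  under eq_cvg do rewrite hitnS A_eta B_eta.
  apply: cvg_big => [|x _ /=]; first exact: add_continuous.
  apply: cvg_big => [|y _ /=]; first exact: add_continuous.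
  by apply: cvgMl_tmp; apply: is_cvg_hitn.
by move=> cvgS; apply: cvg_lim => //; rewrite -cvg_shiftS.
Qed.

End FirstStep.

Section Complement.
Variables (R : realType) (S : finType) (r : S -> S -> R) (dN : R).
Hypotheses (r_ge0 : forall x y, 0 <= r x y) (dN_ge0 : 0 <= dN).
Variables PA PB : pred (config S).

Lemma hitn_sym n eta : hitn r dN PA PB n eta + hitn r dN PB PA n eta <= 1.
Proof.
elim: n eta => [|n IHn] eta.
  by rewrite !hitn0; case: (PB eta); case: (PA eta); rewrite ?addr0 ?add0r.
rewrite !hitnS; case: (PB eta); case: (PA eta); rewrite ?addr0 ?add0r //.
by rewrite -jump_avgD; apply: jump_avg_le1.
Qed.

Lemma hit_sym eta : hit r dN PA PB eta + hit r dN PB PA eta <= 1.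
Proof.
have cvg_hitn P Q : cvgn (fun n => hitn r dN P Q n eta) by apply: is_cvg_hitn.
rewrite /hit -limD //; apply: limr_le; first exact: is_cvgD.
by apply: nearW => n; apply: hitn_sym.
Qed.

End Complement.

Lemma EN_xi (S : finType) N (X : {set S}) x : x \in X -> EN N X (xi N x).
Proof. by move=> xX; apply/existsP; exists x; rewrite xX eqxx. Qed.

Lemma EN_xiF (S : finType) N (X : {set S}) x :
  (0 < N)%N -> x \notin X -> EN N X (xi N x) = false.
Proof.
move=> N_gt0 xX; apply/negbTE/existsP => -[y /andP[yX /eqP xi_xy]].
have := congr1 (fun eta : config S => eta x) xi_xy; rewrite /= !ffunE eqxx.
by have [exy|] := eqVneq x y; [move: xX; rewrite exy yX | lia].
Qed.

Section TwoSiteConfigurations.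
Variables (S : finType) (N : nat) (a c : S).
Hypothesis ac : a != c.

Lemma zeta_a i : zeta N i a c a = (N - i)%N.
Proof. by rewrite ffunE eqxx. Qed.

Lemma zeta_c i : zeta N i a c c = i.
Proof. by rewrite ffunE eq_sym (negbTE ac) eqxx. Qed.

Lemma zeta_out i z : z != a -> z != c -> zeta N i a c z = 0%N.
Proof. by move=> /negbTE za /negbTE zc; rewrite ffunE za zc. Qed.

Lemma zeta0 : zeta N 0 a c = xi N a.
Proof. by apply/ffunP => z; rewrite !ffunE subn0; case: (z == a); case: (z == c). Qed.

Lemma sigma_ca_zeta i : (0 < i <= N)%N -> sigma c a (zeta N i a c) = zeta N i.-1 a c.
Proof.
case/andP=> i_gt0 iN; rewrite /sigma zeta_c i_gt0; apply/ffunP => z; rewrite !ffunE.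
have [->|za] := eqVneq z a; first by rewrite (negbTE ac) /=; lia.
by case: eqP => _ /=; rewrite ?subn1 ?sub0n addn0.
Qed.

Lemma sigma_ac_zeta i : (i < N)%N -> sigma a c (zeta N i a c) = zeta N i.+1 a c.
Proof.
move=> iN; rewrite /sigma zeta_a subn_gt0 iN; apply/ffunP => z; rewrite !ffunE.
have [->|za] := eqVneq z a; first by rewrite (negbTE ac) /=; lia.
by case: eqP => _ /=; rewrite ?addn1 ?addn0 subn0.
Qed.

Lemma EN_zetaF (X : {set S}) i : (0 < i < N)%N -> EN N X (zeta N i a c) = false.
Proof.
case/andP=> i_gt0 iN; apply/negbTE/existsP => -[x /andP[_ /eqP zeta_xi]].
have := congr1 (fun eta : config S => eta a) zeta_xi.
have := congr1 (fun eta : config S => eta c) zeta_xi.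
rewrite /= zeta_a zeta_c !ffunE.
by have [<-|_] := eqVneq a x; rewrite ?(negbTE ac) eq_sym ?(negbTE ac); lia.
Qed.

Lemma sum_zeta (R : pzSemiRingType) i (F : S -> R) :
  \sum_y (zeta N i a c y)%:R * F y = (N - i)%:R * F a + i%:R * F c.
Proof.
rewrite (bigD1 a) //= (bigD1 c) 1?eq_sym //= zeta_a zeta_c big1 ?addr0 //.
by move=> z /andP[zc za]; rewrite zeta_out // mul0r.
Qed.

Lemma incl_total_zeta_le (R : realType) (r : S -> S -> R) dN i :
  (forall x y, 0 <= r x y) -> r a a = 0 -> r c c = 0 -> 0 <= dN -> (i <= N)%N ->
  incl_total r dN (zeta N i a c) <=
    incl_rate r dN (zeta N i a c) c a + incl_rate r dN (zeta N i a c) a c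
    + dN * N%:R * (\sum_y r a y + \sum_y r c y).
Proof.
move=> r_ge0 raa rcc dN_ge0 iN.
have -> : incl_total r dN (zeta N i a c) = \sum_x (zeta N i a c x)%:R *
    (dN * \sum_y r x y + ((N - i)%:R * r x a + i%:R * r x c)).
  apply: eq_bigr => x _; rewrite -(sum_zeta i (r x)) mulr_sumr -big_split mulr_sumr.
  by apply: eq_bigr => y _; rewrite /incl_rate /=; ring.
rewrite sum_zeta raa rcc /incl_rate zeta_a zeta_c -(subnK iN) natrD addnK.
have Ra_ge0 : 0 <= \sum_y r a y by apply: sumr_ge0.
have Rc_ge0 : 0 <= \sum_y r c y by apply: sumr_ge0.
move: (r_ge0 a c) (r_ge0 c a) (N - i)%:R (ler0n R (N - i)) i%:R (ler0n R i).
move: (\sum_y r a y) (\sum_y r c y) Ra_ge0 Rc_ge0 => Ra Rc ? ? ? ? m ? n ?.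
suff : 0 <= dN * (n * r c a + m * r a c + n * Ra + m * Rc) by lra.
by rewrite mulr_ge0 // !addr_ge0 // mulr_ge0.
Qed.
End TwoSiteConfigurations.

(* The barrier is used on [0, L] with [L = 3N/4]: there site [a] keeps at least
   [N/4] particles, and [L - i] grows like [N/4] uniformly in [i <= N/2]. *)
Lemma quarter_bounds N L j : (4 * L <= 3 * N)%N -> (j < L)%N ->
  (j < N)%N /\ (N <= 4 * (N - j))%N.
Proof. by move=> LN jL; split; lia. Qed.

Lemma three_quarters_window N K i : (4 * K + 4 <= N)%N -> (i <= N./2)%N ->
  [/\ 4 * ((3 * N) %/ 4) <= 3 * N, i <= (3 * N) %/ 4, K <= (3 * N) %/ 4 - i & i < N]%N.
Proof. by move=> NK iN; split; lia. Qed.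

Section Barrier.
Variable R : realType.

Lemma ln_succ_sub_ge (y : R) : 0 < y -> (y + 1)^-1 <= ln (y + 1) - ln y.
Proof.
move=> y_gt0; have y1_gt0 : 0 < y + 1 by lra.
have : ln (1 + - (y + 1)^-1) <= - (y + 1)^-1.
  by apply: le_ln1Dx; rewrite ltrNl opprK invf_lt1 //; lra.
have -> : 1 + - (y + 1)^-1 = y / (y + 1) by field; lra.
by rewrite ln_div ?posrE //; lra.
Qed.

Lemma ln_succ_sub_le (y : R) : 0 < y -> ln (y + 1) - ln y <= y^-1.
Proof.
move=> y_gt0; rewrite -ln_div ?posrE ?addr_gt0 //.
have -> : (y + 1) / y = 1 + y^-1 by field; lra.
have inv_gt0 : 0 < y^-1 by rewrite invr_gt0.
by apply: le_ln1Dx; lra.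
Qed.

(* If [w] were negative somewhere, its leftmost minimiser [i] would be interior with
   [w i.-1 > w i <= w i.+1], which the superharmonicity inequality at [i] forbids. *)
Lemma min_principle (w Z P Q : nat -> R) L :
  (forall j, (0 < j < L)%N -> [/\ 0 < P j, 0 <= Q j, P j + Q j <= Z j &
      P j * w j.-1 + Q j * w j.+1 <= Z j * w j]) ->
  0 <= w 0%N -> 0 <= w L -> forall i, (i <= L)%N -> 0 <= w i.
Proof.
move=> super w0_ge0 wL_ge0.
case: (@arg_minP _ _ _ (@ord0 L) predT (fun j : 'I_L.+1 => w j) isT) => k _ k_min.
have w_ge j : (j <= L)%N -> w k <= w j by rewrite -ltnS => jL; exact: k_min (Ordinal jL) isT.
suff wk_ge0 : 0 <= w k by move=> i /w_ge; apply: le_trans.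
rewrite leNgt; apply/negP => wk_lt0.
have ex_min : exists j, (j <= L)%N && (w j <= w k) by exists k; rewrite -ltnS ltn_ord lexx.
case: (ex_minnP ex_min) => i /andP[iL wi_le] i_min.
have wi : w i = w k by apply/le_anti; rewrite wi_le w_ge.
have i_gt0 : (0 < i)%N.
  by rewrite lt0n; apply: contraTneq wk_lt0 => i0; rewrite -leNgt -wi i0.
have i_ltL : (i < L)%N.
  by rewrite ltn_neqAle iL andbT; apply: contraTneq wk_lt0 => iL0; rewrite -leNgt -wi iL0.
have [P_gt0 Q_ge0 PQ_le harm] := super i (introT andP (conj i_gt0 i_ltL)).
have w_pred : w k < w i.-1.
  rewrite ltNge; apply/negP => le_k; have := i_min i.-1.
  by rewrite le_k (leq_trans (leq_pred i) iL) => /(_ isT); rewrite leqNgt prednK ?leqnn.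
have w_succ : w k <= w i.+1 by apply: w_ge.
have : P i * w k < P i * w i.-1 by rewrite ltr_pM2l.
have : Q i * w k <= Q i * w i.+1 by rewrite ler_wpM2l.
have : Z i * w k <= (P i + Q i) * w k by rewrite ler_wnM2r // ltW.
rewrite wi in harm; lra.
Qed.

(* A subsolution of the first-step inequalities along the segment: the geometric
   term absorbs the drift towards [j = 0] (ratio [phi < 1]), the logarithmic term
   the jumps leaving the segment. *)
Definition barrier (phi kappa dN : R) (L j : nat) : R :=
  1 - phi ^+ (L - j) - kappa * dN * ln j.+1%:R.

Lemma barrier_le1 (phi kappa dN : R) L j :
  0 <= phi -> 0 <= kappa -> 0 <= dN -> barrier phi kappa dN L j <= 1.
Proof.
move=> phi_ge0 kappa_ge0 dN_ge0; rewrite /barrier -addrA gerDl -opprD oppr_le0.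
by rewrite addr_ge0 ?exprn_ge0 ?mulr_ge0 // ln_ge0 // ler1n.
Qed.

Lemma barrier_le0 (phi kappa dN : R) L :
  0 <= kappa -> 0 <= dN -> barrier phi kappa dN L L <= 0.
Proof.
move=> kappa_ge0 dN_ge0; rewrite /barrier subnn subrr sub0r oppr_le0.
by rewrite !mulr_ge0 // ln_ge0 // ler1n.
Qed.

Lemma barrier_step (phi kappa dN P Q D : R) (L j : nat) :
  0 < phi < 1 -> 0 <= kappa -> 0 <= dN -> (0 < j < L)%N -> 0 <= Q <= phi * P ->
  D <= kappa * dN * ((1 - phi) * P / j.+1%:R) ->
  (P + Q) * barrier phi kappa dN L j + D <=
    P * barrier phi kappa dN L j.-1 + Q * barrier phi kappa dN L j.+1.
Proof.
move=> /andP[phi_gt0 phi_lt1] kappa_ge0 dN_ge0 /andP[j_gt0 jL] /andP[Q_ge0 QP] DP.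
have P_ge0 : 0 <= P by rewrite -(pmulr_rge0 _ phi_gt0); apply: le_trans QP.
set x := phi ^+ (L - j.+1).
have x_ge0 : 0 <= x by rewrite exprn_ge0 // ltW.
have geo_j : phi ^+ (L - j) = phi * x by rewrite -exprS subnSK.
have geo_pred : phi ^+ (L - j.-1) = phi * (phi * x).
  by rewrite -!exprS; congr (_ ^+ _); lia.
have inv_gt0 : 0 < j.+1%:R^-1 :> R by rewrite invr_gt0 ltr0n.
have log_lo : j.+1%:R^-1 <= ln j.+1%:R - ln j%:R :> R.
  by rewrite -natr1 ln_succ_sub_ge // ltr0n.
have log_hi : ln j.+2%:R - ln j.+1%:R <= j.+1%:R^-1 :> R.
  by rewrite -[j.+2]addn1 natrD ln_succ_sub_le.
rewrite /barrier geo_j geo_pred -/x prednK //.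
have geo : 0 <= x * (1 - phi) * (phi * P - Q) by rewrite !mulr_ge0 ?subr_ge0 // ltW.
have log : (1 - phi) * P / j.+1%:R <=
    P * (ln j.+1%:R - ln j%:R) - Q * (ln j.+2%:R - ln j.+1%:R).
  have P_lo := ler_wpM2l P_ge0 log_lo; have Q_hi := ler_wpM2l Q_ge0 log_hi.
  have : (1 - phi) * P / j.+1%:R <= P / j.+1%:R - Q / j.+1%:R.
    by rewrite -mulrBl; apply: ler_wpM2r; [exact: ltW | rewrite mulrBl mul1r; lra].
  by move=> /le_trans; apply; apply: lerB.
have log_scaled := ler_wpM2l (mulr_ge0 kappa_ge0 dN_ge0) log.
have -> : P * (1 - phi * (phi * x) - kappa * dN * ln j%:R) +
    Q * (1 - x - kappa * dN * ln j.+2%:R) =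
  (P + Q) * (1 - phi * x - kappa * dN * ln j.+1%:R) + (x * (1 - phi) * (phi * P - Q) +
    kappa * dN * (P * (ln j.+1%:R - ln j%:R) - Q * (ln j.+2%:R - ln j.+1%:R))) by ring.
by rewrite lerD2l (le_trans DP) // -[X in X <= _]add0r lerD.
Qed.

End Barrier.

Section LineBarrier.
Variables (R : realType) (S : finType) (r : S -> S -> R) (A B : {set S}) (a c : S).
Hypotheses (r_ge0 : forall x y, 0 <= r x y) (r_diag : forall x, r x x = 0).
Hypotheses (aA : a \in A) (aNB : a \notin B).
Hypotheses (rac_gt0 : 0 < r a c) (rac_lt_rca : r a c < r c a).

Local Notation hit_zeta dN N i := (hit r dN (EN N A) (EN N B) (zeta N i a c)).
Local Notation rate_down dN N j := (incl_rate r dN (zeta N j a c) c a).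
Local Notation rate_up dN N j := (incl_rate r dN (zeta N j a c) a c).
Local Notation rate_out dN N j := (incl_total r dN (zeta N j a c)).

Let rca_gt0 : 0 < r c a. Proof. exact: lt_trans rac_lt_rca. Qed.

Let a_neq_c : a != c.
Proof. by apply: contraTneq rac_gt0 => ->; rewrite r_diag ltxx. Qed.

Let phi := 2 * r a c / (r c a + r a c).
Let M := \sum_y r a y + \sum_y r c y.
(* From [zeta_j] the total rate of jumps off the segment is at most [dN * N * M];
   [kappa] is chosen so that [kappa * (1 - phi) * r c a = 8 * M] pays for them. *)
Let kappa := 8 * M / ((1 - phi) * r c a).

Let phi_gt0 : 0 < phi. Proof. by rewrite divr_gt0 ?mulr_gt0 ?addr_gt0. Qed.
Let phi_lt1 : phi < 1.
Proof. by rewrite ltr_pdivrMr ?addr_gt0 // mul1r mulr_natl mulr2n ltrD2r. Qed.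
Let M_ge0 : 0 <= M. Proof. by rewrite addr_ge0 ?sumr_ge0. Qed.
Let kappa_ge0 : 0 <= kappa.
Proof. by rewrite divr_ge0 ?mulr_ge0 ?subr_ge0 // ltW. Qed.

Lemma rate_down_zeta dN N j : rate_down dN N j = j%:R * (dN + (N - j)%:R) * r c a.
Proof. by rewrite /incl_rate zeta_c // zeta_a. Qed.

Lemma rate_up_zeta dN N j : rate_up dN N j = (N - j)%:R * (dN + j%:R) * r a c.
Proof. by rewrite /incl_rate zeta_c // zeta_a. Qed.

Lemma rate_down_gt0 dN N j : 0 <= dN -> (0 < j < N)%N -> 0 < rate_down dN N j.
Proof.
move=> dN_ge0 /andP[j_gt0 jN].
by rewrite rate_down_zeta !mulr_gt0 ?ltr0n // ltr_wpDl // ltr0n subn_gt0.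
Qed.

Lemma rates_le_out dN N j : 0 <= dN -> rate_down dN N j + rate_up dN N j <= rate_out dN N j.
Proof.
move=> dN_ge0; apply: pair_le_double_sum; first by rewrite eq_sym.
exact: incl_rate_ge0.
Qed.

Lemma hit_zeta_step dN N j : 0 <= dN -> (0 < j < N)%N ->
  rate_down dN N j * hit_zeta dN N j.-1 + rate_up dN N j * hit_zeta dN N j.+1
    <= rate_out dN N j * hit_zeta dN N j.
Proof.
move=> dN_ge0 jN; have /andP[j_gt0 j_ltN] := jN.
have Z_gt0 : 0 < rate_out dN N j.
  apply: lt_le_trans (rates_le_out N j dN_ge0).
  by apply: ltr_wpDr; [exact: incl_rate_ge0 | exact: rate_down_gt0].
rewrite [X in _ <= _ * X](hit_step r_ge0 dN_ge0) ?EN_zetaF // jump_avgZ ?lt0r_neq0 //.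
have j_leN : (0 < j <= N)%N by rewrite j_gt0 ltnW.
rewrite -(sigma_ac_zeta a_neq_c j_ltN) -(sigma_ca_zeta a_neq_c j_leN).
apply: (@pair_le_double_sum _ _ (fun x y => incl_rate r dN (zeta N j a c) x y *
  hit r dN (EN N A) (EN N B) (sigma x y (zeta N j a c))) c a); first by rewrite eq_sym.
by move=> x y; rewrite mulr_ge0 ?incl_rate_ge0 ?hit_ge0.
Qed.

Lemma rate_up_le_phi dN N j : 0 <= dN -> dN * (r c a + r a c) <= r c a - r a c ->
  (0 < j <= N)%N -> rate_up dN N j <= phi * rate_down dN N j.
Proof.
move=> dN_ge0 dN_small /andP[j_gt0 jN]; rewrite rate_up_zeta rate_down_zeta /phi.
have : 1 <= j%:R :> R by rewrite ler1n.
move: (N - j)%:R (ler0n R (N - j)) j%:R => m m_ge0 n n_ge1.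
have drift : (dN + n) * (r c a + r a c) <= 2 * n * r c a.
  have : r c a - r a c <= n * (r c a - r a c) by rewrite ler_peMl // subr_ge0 ltW.
  lra.
have := ler_pM m_ge0 (mulr_ge0 (addr_ge0 dN_ge0 (le_trans ler01 n_ge1))
  (addr_ge0 (ltW rca_gt0) (ltW rac_gt0))) (ler_wpDl dN_ge0 (lexx m)) drift.
move/(ler_wpM2r (ltW rac_gt0)) => scaled.
by rewrite [_ / _ * _]mulrAC ler_pdivlMr ?addr_gt0 //; lra.
Qed.

Lemma escape_rate_le dN N j : 0 <= dN -> (0 < j)%N -> (N <= 4 * (N - j))%N ->
  dN * N%:R * M <= kappa * dN * ((1 - phi) * rate_down dN N j / j.+1%:R).
Proof.
move=> dN_ge0 j_gt0 jN; rewrite rate_down_zeta.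
have -> : kappa * dN * ((1 - phi) * (j%:R * (dN + (N - j)%:R) * r c a) / j.+1%:R) =
    dN * M * (8 * j%:R * (dN + (N - j)%:R) / j.+1%:R).
  rewrite /kappa; field.
  by apply/and3P; split; apply: lt0r_neq0; rewrite ?subr_gt0 // ltr_pwDl.
rewrite mulrAC ler_wpM2l ?mulr_ge0 // ler_pdivlMr ?ltr0n //.
have N_le : N%:R <= 4 * (N - j)%:R :> R by rewrite -natrM ler_nat.
have j1_le : j.+1%:R <= 2 * j%:R :> R.
  by rewrite -natrM ler_nat mul2n -addnn -addn1 leq_add2l.
have := ler_pM (ler0n R N) (ler0n R j.+1) N_le j1_le.
have : 0 <= j%:R * dN by rewrite mulr_ge0.
lra.
Qed.

Lemma barrier_zeta_step dN N L j : 0 <= dN -> dN * (r c a + r a c) <= r c a - r a c ->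
  (4 * L <= 3 * N)%N -> (0 < j < L)%N ->
  rate_out dN N j * barrier phi kappa dN L j <=
    rate_down dN N j * barrier phi kappa dN L j.-1 +
    rate_up dN N j * barrier phi kappa dN L j.+1.
Proof.
move=> dN_ge0 dN_small LN jL; have /andP[j_gt0 j_ltL] := jL.
have [j_ltN N_le] := quarter_bounds LN j_ltL.
have up_range : 0 <= rate_up dN N j <= phi * rate_down dN N j.
  by rewrite incl_rate_ge0 // rate_up_le_phi // j_gt0 ltnW.
have := barrier_step (introT andP (conj phi_gt0 phi_lt1)) kappa_ge0 dN_ge0 jL up_range
  (escape_rate_le dN_ge0 j_gt0 N_le).
have := incl_total_zeta_le a_neq_c r_ge0 (r_diag a) (r_diag c) dN_ge0 (ltnW j_ltN).
rewrite -/M; have := rates_le_out N j dN_ge0.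
have := barrier_le1 L j (ltW phi_gt0) kappa_ge0 dN_ge0.
set Z := rate_out dN N j; set P := rate_down dN N j; set Q := rate_up dN N j.
set g := barrier phi kappa dN L j => g_le1 PQ_le Z_le step.
have : (Z - (P + Q)) * g <= Z - (P + Q) by rewrite ler_piMr ?subr_ge0.
lra.
Qed.

Lemma barrier_le_hit_zeta dN N L : 0 < dN -> dN * (r c a + r a c) <= r c a - r a c ->
  (0 < N)%N -> (4 * L <= 3 * N)%N ->
  forall i, (i <= L)%N -> barrier phi kappa dN L i <= hit_zeta dN N i.
Proof.
move=> dN_gt0 dN_small N_gt0 LN i iL; have dN_ge0 := ltW dN_gt0; rewrite -subr_ge0.
apply: (@min_principle _ (fun j => hit_zeta dN N j - barrier phi kappa dN L j)
  (fun j => rate_out dN N j) (fun j => rate_down dN N j) (fun j => rate_up dN N j) L) iL.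
- move=> j jL; have /andP[j_gt0 j_ltL] := jL.
  have jN : (0 < j < N)%N by rewrite j_gt0 (quarter_bounds LN j_ltL).1.
  split; [exact: rate_down_gt0 | exact: incl_rate_ge0 | exact: rates_le_out |].
  have := hit_zeta_step dN_ge0 jN; have := barrier_zeta_step dN_ge0 dN_small LN jL.
  rewrite !mulrBr; lra.
- have hit_xi : hit r dN (EN N A) (EN N B) (xi N a) = 1.
    by rewrite hit_eq1 //; [exact: EN_xi | rewrite EN_xiF].
  rewrite zeta0 hit_xi subr_ge0.
  exact: barrier_le1 (ltW phi_gt0) kappa_ge0 dN_ge0.
- by rewrite subr_ge0 (le_trans (barrier_le0 _ _ kappa_ge0 dN_ge0)) ?hit_ge0.
Qed.

Lemma hit_zeta_near1 (d : nat -> R) : (forall N, 0 < d N) -> (d @ \oo --> 0)%classic ->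
  ((fun N => d N * ln N%:R) @ \oo --> 0)%classic ->
  forall eps, 0 < eps -> exists N0, forall N, (N0 <= N)%N ->
    forall i, (i <= N./2)%N -> `|hit_zeta (d N) N i - 1| <= eps.
Proof.
move=> d_gt0 d_lim dlog_lim eps eps_gt0.
have eps2_gt0 : 0 < eps / 2 by rewrite divr_gt0.
have phi_lim : ((GRing.exp phi : R ^nat) @ \oo --> 0)%classic.
  by apply: cvg_expr; rewrite ger0_norm ?ltW.
have [K _ phiK] := cvgr_le _ phi_lim _ eps2_gt0.
suff near1 : (\forall N \near \oo,
    forall i, (i <= N./2)%N -> 1 - eps <= hit_zeta (d N) N i)%classic.
  case: near1 => N0 _ HN0; exists N0 => N /HN0 hN i /hN lb.
  have le1 := hit_le1 r_ge0 (ltW (d_gt0 N)) (EN N A) (EN N B) (zeta N i a c).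
  by rewrite distrC ger0_norm ?subr_ge0 //; lra.
near=> N => i iN.
have dN_small : d N * (r c a + r a c) <= r c a - r a c.
  near: N; apply: (cvgr_le _ (cvgMr_tmp d_lim)).
  by rewrite mul0r subr_gt0.
have dlog_small : kappa * (d N * ln N%:R) <= eps / 2.
  by near: N; apply: (cvgr_le _ (cvgMl_tmp dlog_lim)); rewrite mulr0.
have NK : (4 * K + 4 <= N)%N by near: N; exists (4 * K + 4)%N.
have [LN iL KL iN'] := three_quarters_window NK iN.
have := barrier_le_hit_zeta (d_gt0 N) dN_small (leq_ltn_trans (leq0n i) iN') LN iL.
have := phiK _ KL.
have : kappa * d N * ln i.+1%:R <= eps / 2.
  apply: le_trans dlog_small; rewrite -mulrA; apply: ler_wpM2l => //.
  apply: ler_wpM2l; first exact: ltW.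
  by rewrite ler_ln ?posrE ?ltr0n ?ler_nat // (leq_ltn_trans (leq0n i)).
rewrite /barrier; lra.
Unshelve. all: end_near.
Qed.

End LineBarrier.

Theorem lemma4p4 (R : realType) (S : finType) (r : S -> S -> R) (m : S -> R)
    (d : nat -> R)
    (r_ge0 : forall x y, 0 <= r x y)
    (r_diag : forall x, r x x = 0)
    (r_irr : forall x y, connect (fun u v => 0 < r u v) x y)
    (m_ge0 : forall x, 0 <= m x)
    (m_sum : \sum_x m x = 1)
    (m_rev : forall x y, m x * r x y = m y * r y x)
    (d_pos : forall N, 0 < d N)
    (d_lim : (d @ \oo --> 0)%classic)
    (dlog_lim : ((fun N => d N * ln N%:R) @ \oo --> 0)%classic)
    (A B : {set S}) (AB : [disjoint A & B]) (a b c : S)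
    (aA : a \in A) (bB : b \in B)
    (hac : 0 < r a c < r c a) (hbc : 0 < r b c < r c b) :
  (forall eps : R, 0 < eps -> exists N0 : nat, forall N : nat, (N0 <= N)%N ->
     forall i : nat, (i <= N./2)%N ->
       `|hit r (d N) (EN N A) (EN N B) (zeta N i a c) - 1| <= eps)
  /\
  (forall eps : R, 0 < eps -> exists N0 : nat, forall N : nat, (N0 <= N)%N ->
     forall i : nat, (i <= N./2)%N ->
       `|hit r (d N) (EN N A) (EN N B) (zeta N i b c)| <= eps).
Proof.
have [aNB bNA] : a \notin B /\ b \notin A by rewrite (disjointFr AB aA) (disjointFl AB bB).
case/andP: hac => rac_gt0 rac_lt_rca; case/andP: hbc => rbc_gt0 rbc_lt_rcb.
split=> eps eps_gt0.
  exact: (hit_zeta_near1 r_ge0 r_diag aA aNB rac_gt0 rac_lt_rca d_pos d_lim dlog_lim).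
have [N0 near1_b] :=
  hit_zeta_near1 r_ge0 r_diag bB bNA rbc_gt0 rbc_lt_rcb d_pos d_lim dlog_lim eps_gt0.
exists N0 => N /near1_b near1_bN i /near1_bN.
have dN_ge0 := ltW (d_pos N).
have := hit_sym r_ge0 dN_ge0 (EN N A) (EN N B) (zeta N i b c).
rewrite (ger0_norm (hit_ge0 r_ge0 dN_ge0 _ _ _)) distrC.
move=> sum_le1 /(le_trans (ler_norm _)).
lra.
Qed.
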